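(* Let the setting be as in the context and suppose that $F_c$ satisfies $\lim_{n\to\infty} n\,\bar F_c(\tau_{F_c}-\xi/\sqrt n)=\infty$ for every $\xi>0$. Then $\tau_H=\tau_{F_c}<\infty$ and $\sqrt n\,(\tau_H-t_{(n)})\to 0$ in probability as $n\to\infty$, where $t_{(n)}=\max_{1\le i\le n}Y_i$.
   Context: $T\in[0,\infty]$ and $C\ge0$ are independent; $T$ has improper distribution function $F(t)=\mathbb P(T\le t)=pF_0(t)$ with $0<p<1$ and $F_0$ a proper distribution function, and $C$ has distribution function $F_c$. $Y=\min(T,C)$ has distribution function $H$ with $1-H=(1-F)(1-F_c)$. For a distribution function $G$, $\bar G=1-G$ and $\tau_G=\sup\{t\ge0:G(t)<1\}$. $Y_1,\dots,Y_n$ are i.i.d. copies of $Y$. *)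

From HB Require Import structures.
From mathcomp Require Import all_boot all_order all_algebra.
From mathcomp Require Import all_classical all_reals all_analysis measurable_realfun.
Set Implicit Arguments. Unset Strict Implicit. Unset Printing Implicit Defensive.
Import Order.TTheory GRing.Theory Num.Theory.
Import numFieldNormedType.Exports.
Local Open Scope classical_set_scope.
Local Open Scope ring_scope.

Definition distr_fun (R : realType) (d : measure_display) (O : measurableType d)
  (P : probability O R) (X : O -> R) (t : R) : R :=
  fine (P [set w | X w <= t]).

(* (possibly improper) distribution function of an extended-real r.v.:
   t |-> P(X <= t), t real *)
Definition distr_funE (R : realType) (d : measure_display) (O : measurableType d)
  (P : probability O R) (X : O -> \bar R) (t : R) : R :=
  fine (P [set w | (X w <= t%:E)%E]).

Definition proper_distribution_function (R : realType) (G : R -> R) : Prop :=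
  [/\ {homo G : x y / x <= y},
      (forall x, G y @[y --> x^'+] --> G x),
      (G x @[x --> -oo] --> (0:R)) &
      (G x @[x --> +oo] --> (1:R))].

(* tau_G = sup {t >= 0 : G t < 1}, in [0, +oo]; (sup of the empty subset
   of [0,oo) taken to be 0) *)
Definition tau (R : realType) (G : R -> R) : \bar R :=
  ereal_sup ([set 0%E] `|` [set t%:E | t in [set t | 0 <= t /\ G t < 1]]).

Definition survE (R : realType) (G : R -> R) (x : \bar R) : R :=
  match x with
  | r%:E => 1 - G r
  | +oo%E => 0
  | -oo%E => 1
  end.

Definition indep2 (R : realType) (d : measure_display) (O : measurableType d)
  (P : probability O R) (d1 d2 : measure_display)
  (T1 : measurableType d1) (T2 : measurableType d2)
  (X1 : O -> T1) (X2 : O -> T2) : Prop :=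
  forall (A : set T1) (B : set T2), measurable A -> measurable B ->
    P (X1 @^-1` A `&` X2 @^-1` B) = (P (X1 @^-1` A) * P (X2 @^-1` B))%E.

Definition mutually_independent (R : realType) (d : measure_display)
  (O : measurableType d) (P : probability O R) (X : nat -> O -> R) : Prop :=
  forall (I : seq nat) (B : nat -> set R), uniq I ->
    (forall i, measurable (B i)) ->
    P (\bigcap_(i in [set j | j \in I]) (X i @^-1` B i)) =
    (\prod_(i <- I) P (X i @^-1` B i))%E.

(* By independence, 1 - H = (1 - F) (1 - Fc), and 1 - F >= 1 - p > 0 because T puts mass
   only p < 1 on the reals.  Hence H and Fc reach 1 at the same points, so tau_H = tau_Fc, and
   tau_Fc is finite since otherwise every survival term of the tail hypothesis would vanish.
   For the rate put s = eps / sqrt n.  The sample maximum is almost surely <= tau + s, and it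
   is < tau - s with probability P(Y < tau - s)^n <= (1 - a)^n <= 1 / (1 + n a), where
   a = (1 - p) bar Fc(tau - s); the hypothesis n bar Fc(tau - eps / sqrt n) -> oo makes this
   bound vanish. *)

From HB Require Import structures.
From mathcomp Require Import all_boot all_order all_algebra.
From mathcomp Require Import all_classical all_reals all_analysis measurable_realfun.
From mathcomp Require Import lra.
Import Order.TTheory GRing.Theory Num.Theory.
Import numFieldNormedType.Exports.
Local Open Scope classical_set_scope.
Local Open Scope ring_scope.

Lemma measurable_preimageT {d d'} {aT : measurableType d} {rT : measurableType d'}
    {f : aT -> rT} {B : set rT} :
  measurable_fun setT f -> measurable B -> measurable (f @^-1` B).
Proof. by move=> mf mB; rewrite -[_ @^-1` _]setTI; exact: mf. Qed.

Section measurable_halflines.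
Context {R : realType}.
Implicit Types t : R.

Lemma measurable_ler t : measurable [set x : R | x <= t].
Proof.
rewrite (_ : [set x | x <= t] = `]-oo, t]%classic); first exact: measurable_itv.
by apply/seteqP; split => x /=; rewrite in_itv.
Qed.

Lemma measurable_ltr t : measurable [set x : R | x < t].
Proof.
rewrite (_ : [set x | x < t] = `]-oo, t[%classic); first exact: measurable_itv.
by apply/seteqP; split => x /=; rewrite in_itv.
Qed.

Lemma measurable_gtr t : measurable [set x : R | t < x].
Proof.
rewrite (_ : [set x | t < x] = `]t, +oo[%classic); first exact: measurable_itv.
by apply/seteqP; split => x /=; rewrite in_itv /= andbT.
Qed.

Lemma measurable_gte t : measurable [set x : \bar R | (t%:E < x)%E].
Proof.
rewrite (_ : [set x | _] = [set` Interval (BRight t%:E) (BInfty _ false)]).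
  exact: emeasurable_itv.
by apply/seteqP; split => x /=; rewrite in_itv /= andbT.
Qed.

End measurable_halflines.

Lemma setC_gt {T : Type} {disp} {X : orderType disp} (f : T -> X) (t : X) :
  ~` [set w | (t < f w)%O] = [set w | (f w <= t)%O].
Proof. by apply/seteqP; split => w /=; rewrite leNgt => /negP. Qed.

Section distribution_functions.
Context {R : realType} {d : measure_display} {O : measurableType d}.
Context (P : probability O R).

Lemma fine_probability_setC (A : set O) :
  measurable A -> fine (P (~` A)) = 1 - fine (P A).
Proof. by move=> mA; rewrite probability_setC // -[P A]fineK ?fin_num_measure. Qed.

Lemma distr_fun_le1 (X : O -> R) t :
  measurable_fun setT X -> distr_fun P X t <= 1.
Proof.
move=> mX; have mA := measurable_preimageT mX (measurable_ler t).
by rewrite /distr_fun -lee_fin fineK ?fin_num_measure ?probability_le1.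
Qed.

Lemma distr_fun_survival (X : O -> R) t : measurable_fun setT X ->
  1 - distr_fun P X t = fine (P [set w | t < X w]).
Proof.
move=> mX; rewrite /distr_fun -setC_gt fine_probability_setC ?subKr //.
exact: measurable_preimageT mX (measurable_gtr t).
Qed.

Lemma distr_funE_survival (X : O -> \bar R) t : measurable_fun setT X ->
  1 - distr_funE P X t = fine (P [set w | (t%:E < X w)%E]).
Proof.
move=> mX; rewrite /distr_funE -setC_gt fine_probability_setC ?subKr //.
exact: measurable_preimageT mX (measurable_gte t).
Qed.

End distribution_functions.

Lemma proper_distribution_function_le1 (R : realType) (G : R -> R) t :
  proper_distribution_function G -> G t <= 1.
Proof.
case=> G_homo _ _ G_cvg1; rewrite leNgt; apply/negP => Gt_gt1.
have [x [Gx_lt x_ge]] := filter_ex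
  (filterI (cvgr_lt _ G_cvg1 _ Gt_gt1) (nbhs_pinfty_ge (num_real t))).
by have := G_homo _ _ x_ge; rewrite leNgt Gx_lt.
Qed.

Section tau.
Context {R : realType}.
Implicit Types G : R -> R.

Lemma tau_ge0 G : (0 <= tau G)%E.
Proof. by apply: ereal_sup_ubound; left. Qed.

Lemma eq_tau G1 G2 : (forall t, 0 <= t -> (G1 t < 1) = (G2 t < 1)) ->
  tau G1 = tau G2.
Proof.
move=> eqG; rewrite /tau; congr (ereal_sup (_ `|` _)); apply/seteqP.
by split => _ [t [t0 Gt] <-]; exists t => //; split => //; [rewrite -eqG | rewrite eqG].
Qed.

Lemma eq1_tau_lt G t : (forall s, G s <= 1) -> (tau G < t%:E)%E -> G t = 1.
Proof.
move=> G_le1 tauG_lt; apply/eqP; rewrite eq_le G_le1 /= leNgt; apply/negP => Gt_lt1.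
suff : (t%:E <= tau G)%E by rewrite leNgt tauG_lt.
apply: ereal_sup_ubound; right; exists t => //; split => //.
by rewrite -lee_fin (le_trans (tau_ge0 G)) ?ltW.
Qed.

Lemma tau_fin_num {G} {x : nat -> R} :
  (n%:R * survE G (tau G - (x n)%:E))%:E @[n --> \oo] --> +oo%E ->
  tau G \is a fin_num.
Proof.
have := tau_ge0 G; case: (tau G) => [//|_|//].
move=> /cvgeryP/cvgryPge/(_ 1)/filter_ex[n] /=.
by rewrite mulr0 ler10.
Qed.

End tau.

Section bigmax_ord.
Context {R : realDomainType} (f : nat -> R) (n : nat) (c : R).
Hypothesis n_gt0 : (0 < n)%N.

Lemma bigmax_ord_ltP :
  (\big[Num.max/f 0%N]_(i < n) f i < c) <-> (forall i, (i < n)%N -> f i < c).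
Proof.
split => [/bigmax_ltP[_ fc] i ltin | fc]; first exact: (fc (Ordinal ltin)).
by apply/bigmax_ltP; split => [|i _]; exact: fc.
Qed.

Lemma bigmax_ord_leP :
  (\big[Num.max/f 0%N]_(i < n) f i <= c) <-> (forall i, (i < n)%N -> f i <= c).
Proof.
split => [/bigmax_leP[_ fc] i ltin | fc]; first exact: (fc (Ordinal ltin)).
by apply/bigmax_leP; split => [|i _]; exact: fc.
Qed.

End bigmax_ord.

Section iid_maximum.
Context {R : realType} {d : measure_display} {O : measurableType d}.
Context {Q : probability O R} {X : nat -> O -> R}.
Hypotheses (mX : forall i, measurable_fun setT (X i))
  (indX : mutually_independent Q X).

Local Notation M n w := (\big[Num.max/X 0%N w]_(i < n) X i w).

Lemma measurable_bigcap_preimage n (B : set R) : measurable B ->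
  measurable (\bigcap_(i in `I_n) X i @^-1` B).
Proof.
move=> mB; apply: fin_bigcap_measurable; first exact: finite_II.
by move=> i _; exact: measurable_preimageT (mX i) mB.
Qed.

Lemma iid_bigcap n (B : set R) (q : R) : measurable B ->
  (forall i, Q (X i @^-1` B) = q%:E) ->
  Q (\bigcap_(i in `I_n) X i @^-1` B) = (q ^+ n)%:E.
Proof.
move=> mB XB; have -> : `I_n = [set j | j \in iota 0 n].
  by apply/seteqP; split => j /=; rewrite mem_iota.
rewrite (indX (iota 0 n) (fun=> B) (iota_uniq 0 n)) // (eq_bigr (fun=> q%:E)) //.
by rewrite prodEFin; have := prodr_const_nat 0 n q; rewrite /index_iota subn0 => ->.
Qed.

Lemma bigmax_lt_bigcap n c : (0 < n)%N ->
  [set w | M n w < c] = \bigcap_(i in `I_n) X i @^-1` [set y | y < c].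
Proof.
by move=> n_gt0; apply/seteqP; split => w /=; rewrite (bigmax_ord_ltP (X^~ w)).
Qed.

Lemma bigmax_le_bigcap n c : (0 < n)%N ->
  [set w | M n w <= c] = \bigcap_(i in `I_n) X i @^-1` [set y | y <= c].
Proof.
by move=> n_gt0; apply/seteqP; split => w /=; rewrite (bigmax_ord_leP (X^~ w)).
Qed.

End iid_maximum.

Lemma scaled_deviation_event {R : realFieldType} {T : Type} (M : T -> R) (r e t : R) :
  0 < r -> [set w | e < `|r * (t - M w)|] =
           [set w | M w < t - e / r] `|` ~` [set w | M w <= t + e / r].
Proof.
move=> r_gt0; apply/seteqP; split => w /=;
  rewrite normrM gtr0_norm // [_ * `|_|]mulrC -ltr_pdivrMr // ltr_normr opprB !ltrBrDl;
  rewrite [e / r + _]addrC [t + _ < _]ltNge.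
  by case/orP => [lt_w | /negP le_w]; [left | right].
by case => [-> // | /negP ->]; rewrite orbT.
Qed.

Lemma expr_1B_le_inv {R : realFieldType} (a : R) n : 0 <= a <= 1 ->
  (1 - a) ^+ n <= (1 + n%:R * a)^-1.
Proof.
case/andP => a_ge0 a_le1; rewrite -div1r ler_pdivlMr ?ltr_wpDr ?mulr_ge0 //.
elim: n => [|n IHn]; first by rewrite expr0 mul0r addr0 mulr1.
have ha : (1 - a) * (1 + n.+1%:R * a) <= 1 + n%:R * a.
  by rewrite -natr1; have : 0 <= n%:R :> R by []; nra.
rewrite exprSr -mulrA; apply: le_trans IHn.
by rewrite ler_wpM2l ?exprn_ge0 ?subr_ge0.
Qed.

Lemma cvge0_le_inv_linear {R : realType} (u : nat -> \bar R) (x : nat -> R) (c : R) :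
  0 < c -> (forall n, 0 <= u n)%E ->
  (\forall n \near \oo, u n <= ((1 + c * x n)^-1)%:E)%E ->
  x n @[n --> \oo] --> +oo -> u n @[n --> \oo] --> 0%E.
Proof.
move=> c_gt0 u_ge0 u_le x_cvgy.
apply: (@squeeze_cvge _ _ _ _ (cst 0%E) _ (fun n => ((1 + c * x n)^-1)%:E)).
- by apply: filterS u_le => n ->; rewrite u_ge0.
- exact: cvg_cst.
apply: cvg_EFin; first exact: nearW.
apply/cvgrPdist_lt => e e_gt0.
have ce_gt0 : 0 < c * e by rewrite mulr_gt0.
near=> n.
have x_ge : (c * e)^-1 <= x n by near: n; exact: (proj1 (cvgryPge _) x_cvgy).
have cx_gt : e^-1 < 1 + c * x n.
  by rewrite ltr_pwDl // -ler_pdivrMl // -invfM.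
have cx_gt0 : 0 < 1 + c * x n by rewrite (lt_trans _ cx_gt) ?invr_gt0.
by rewrite /= sub0r normrN gtr0_norm ?invr_gt0 // invf_plt ?posrE.
Unshelve. all: end_near.
Qed.

Definition censored_min {R : realType} {O : Type} (T : O -> \bar R) (C : O -> R)
  (w : O) : R := fine (Order.min (T w) (C w)%:E).

Lemma ltr_fine_min {R : realType} (x : \bar R) (c t : R) : x != -oo%E ->
  (t < fine (Order.min x c%:E)) = (t%:E < x)%E && (t < c).
Proof.
case: x => [r _| _ |//]; first by rewrite -EFin_min /= lt_min.
by rewrite ltry.
Qed.

Section censoring.
Context {R : realType} {d : measure_display} {Omega : measurableType d}.
Context {mu : probability Omega R} {T : Omega -> \bar R} {C : Omega -> R} {p : R}.
Hypotheses (mT : measurable_fun setT T) (mC : measurable_fun setT C)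
  (T_neqNy : forall w, T w != -oo%E) (indTC : indep2 mu T C).
Hypotheses (p_lt1 : p < 1) (F_le : forall t, distr_funE mu T t <= p).

Local Notation Y := (censored_min T C).
Local Notation F := (distr_funE mu T).
Local Notation Fc := (distr_fun mu C).
Local Notation H := (distr_fun mu Y).

Lemma measurable_censored_min : measurable_fun setT Y.
Proof.
apply: measurableT_comp; first exact: fine_measurable.
by apply: measurable_mine => //; exact/measurable_EFinP.
Qed.

Lemma survival_censored_min t : 1 - H t = (1 - F t) * (1 - Fc t).
Proof.
rewrite distr_funE_survival // !distr_fun_survival //; last exact: measurable_censored_min.
have -> : [set w | t < Y w] =
    T @^-1` [set x | (t%:E < x)%E] `&` C @^-1` [set x | t < x].
  by apply/seteqP; split => w /=; rewrite /censored_min ltr_fine_min // => /andP.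
have mT_gt := measurable_preimageT mT (measurable_gte t).
have mC_gt := measurable_preimageT mC (measurable_gtr t).
rewrite indTC ?fineM ?fin_num_measure //; [exact: measurable_gte | exact: measurable_gtr].
Qed.

Lemma survival_censored_min_ge t : (1 - p) * (1 - Fc t) <= 1 - H t.
Proof.
rewrite survival_censored_min ler_wpM2r ?lerB //.
by rewrite subr_ge0 distr_fun_le1.
Qed.

Lemma censored_min_lt1 t : (H t < 1) = (Fc t < 1).
Proof.
rewrite -subr_gt0 -[Fc t < 1]subr_gt0 survival_censored_min pmulr_rgt0 //.
by rewrite subr_gt0 (le_lt_trans (F_le t)).
Qed.

Lemma tau_censored_min : tau H = tau Fc.
Proof. by apply: eq_tau => t _; exact: censored_min_lt1. Qed.

Lemma censored_min_tau_lt t : (tau Fc < t%:E)%E -> H t = 1.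
Proof.
move=> /eq1_tau_lt Fc_t; apply/eqP; rewrite eq_sym -subr_eq0 survival_censored_min.
by rewrite Fc_t ?subrr ?mulr0 // => s; exact: distr_fun_le1.
Qed.

Section sample.
Context {d' : measure_display} {Omega' : measurableType d'}.
Context {Q : probability Omega' R} {Ys : nat -> Omega' -> R}.
Hypotheses (mYs : forall i, measurable_fun setT (Ys i))
  (indYs : mutually_independent Q Ys)
  (lawYs : forall i B, measurable B -> Q (Ys i @^-1` B) = mu (Y @^-1` B)).

Local Notation M n w := (\big[Num.max/Ys 0%N w]_(i < n) Ys i w).

Let mY_lt c : measurable (Y @^-1` [set y | y < c]).
Proof. exact: measurable_preimageT measurable_censored_min (measurable_ltr c). Qed.

Let mY_le c : measurable (Y @^-1` [set y | y <= c]).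
Proof. exact: measurable_preimageT measurable_censored_min (measurable_ler c). Qed.

Lemma measurable_bigmax_lt n c : (0 < n)%N -> measurable [set w | M n w < c].
Proof.
move=> n_gt0; rewrite (bigmax_lt_bigcap (X := Ys)) //.
exact: measurable_bigcap_preimage mYs n _ (measurable_ltr c).
Qed.

Lemma measurable_bigmax_le n c : (0 < n)%N -> measurable [set w | M n w <= c].
Proof.
move=> n_gt0; rewrite (bigmax_le_bigcap (X := Ys)) //.
exact: measurable_bigcap_preimage mYs n _ (measurable_ler c).
Qed.

Lemma prob_bigmax_le_tau_lt n c : (0 < n)%N -> (tau Fc < c%:E)%E ->
  Q [set w | M n w <= c] = 1%E.
Proof.
move=> n_gt0 tau_lt; rewrite (bigmax_le_bigcap (X := Ys)) //.
rewrite (iid_bigcap indYs _ _ 1) ?expr1n //; first exact: measurable_ler.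
move=> i; rewrite lawYs; last exact: measurable_ler.
by rewrite -[LHS]fineK ?fin_num_measure //; congr EFin; exact: censored_min_tau_lt.
Qed.

Lemma prob_bigmax_lt_le n c : (0 < n)%N ->
  (Q [set w | M n w < c]%R <= ((1 - (1 - p) * (1 - Fc c)) ^+ n)%:E)%E.
Proof.
move=> n_gt0; set q := fine (mu (Y @^-1` [set y | y < c])).
rewrite (bigmax_lt_bigcap (X := Ys)) // (iid_bigcap indYs _ _ q) //; last first.
- by move=> i; rewrite lawYs ?fineK ?fin_num_measure //; exact: measurable_ltr.
- exact: measurable_ltr.
have q_le : q <= H c.
  apply: fine_le; [exact: fin_num_measure (mY_lt c) | exact: fin_num_measure (mY_le c) |].
  by apply: le_measure; rewrite ?inE; [exact: mY_lt | exact: mY_le | move=> w /ltW].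
have a_le := survival_censored_min_ge c.
have H_ge0 : 0 <= H c := fine_ge0 (measure_ge0 _ _).
by rewrite lee_fin; apply: lerXn2r; rewrite ?nnegrE ?fine_ge0 //; lra.
Qed.

Lemma prob_bigmax_deviation n eps : tau Fc \is a fin_num -> (0 < n)%N -> 0 < eps ->
  (Q [set w | eps < `|Num.sqrt n%:R * (fine (tau Fc) - M n w)|]%R <=
   ((1 + (1 - p) * (n%:R * survE Fc (tau Fc - (eps / Num.sqrt n%:R)%:E)))^-1)%:E)%E.
Proof.
move=> tau_fin n_gt0 eps_gt0; set tau0 := fine (tau Fc).
have tauE : tau Fc = tau0%:E by rewrite fineK.
have sqrtn_gt0 : 0 < Num.sqrt n%:R :> R by rewrite sqrtr_gt0 ltr0n.
set s := eps / Num.sqrt n%:R; have s_gt0 : 0 < s by rewrite divr_gt0.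
rewrite (scaled_deviation_event (fun w => M n w) _ _ _ sqrtn_gt0) -/s.
set A := [set w | M n w < tau0 - s]; set B := [set w | M n w <= tau0 + s].
have Q_union : (Q (A `|` ~` B) <= Q A + Q (~` B))%E.
  exact: measureU2 (measurable_bigmax_lt _ _ n_gt0) (measurableC (measurable_bigmax_le _ _ n_gt0)).
apply: le_trans Q_union _.
rewrite (probability_setC Q (measurable_bigmax_le _ _ n_gt0)).
rewrite prob_bigmax_le_tau_lt ?tauE ?lte_fin ?ltrDl // subee // adde0.
apply: le_trans (prob_bigmax_lt_le _ _ n_gt0) _; rewrite lee_fin.
have -> : n%:R * survE Fc (tau0%:E - s%:E) = n%:R * (1 - Fc (tau0 - s)) by [].
rewrite mulrCA; apply: expr_1B_le_inv.
have a_le := survival_censored_min_ge (tau0 - s).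
have H_ge0 : 0 <= H (tau0 - s) := fine_ge0 (measure_ge0 _ _).
by rewrite mulr_ge0 ?subr_ge0 ?distr_fun_le1 ?(ltW p_lt1) //=; lra.
Qed.

End sample.

End censoring.

Theorem mainTheorem2 (R : realType)
  (d : measure_display) (Omega : measurableType d) (mu : probability Omega R)
  (T : Omega -> \bar R) (C : Omega -> R) (p : R) (F0 : R -> R)
  (d' : measure_display) (Omega' : measurableType d') (Q : probability Omega' R)
  (Ys : nat -> Omega' -> R) :
  measurable_fun setT T -> (forall w, (0 <= T w)%E) ->
  measurable_fun setT C -> (forall w, 0 <= C w) ->
  indep2 mu T C ->
  0 < p < 1 -> proper_distribution_function F0 ->
  (forall t, distr_funE mu T t = p * F0 t) ->
  let Y := fun w => fine (Order.min (T w) (C w)%:E) in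
  (forall i, measurable_fun setT (Ys i)) ->
  mutually_independent Q Ys ->
  (forall i (B : set R), measurable B -> Q (Ys i @^-1` B) = mu (Y @^-1` B)) ->
  let Fc := distr_fun mu C in
  let H := distr_fun mu Y in
  (forall xi : R, 0 < xi ->
     ((n%:R * survE Fc (tau Fc - (xi / Num.sqrt n%:R)%:E))%:E)%E
       @[n --> \oo] --> +oo%E) ->
  tau H = tau Fc /\ (tau Fc < +oo)%E /\
  (forall eps : R, 0 < eps ->
     Q [set w | eps < `| Num.sqrt n%:R *
                   (fine (tau H) - \big[Num.max/Ys 0%N w]_(i < n) Ys i w) | ]
       @[n --> \oo] --> 0%E).
Proof.
move=> mT T_ge0 mC _ indTC /andP[p_gt0 p_lt1] F0_df F_eq Y mYs indYs lawYs Fc H Fc_tail.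
have T_neqNy w : T w != -oo%E by rewrite gt_eqF // (lt_le_trans ltNy0 (T_ge0 w)).
have F_le t : distr_funE mu T t <= p.
  rewrite F_eq ler_piMr //; [exact: ltW | exact: proper_distribution_function_le1].
have tau_fin : tau Fc \is a fin_num := tau_fin_num (Fc_tail 1 ltr01).
have tauH : tau H = tau Fc := tau_censored_min mT mC T_neqNy indTC p_lt1 F_le.
split => //; split; first by rewrite -(fineK tau_fin) ltry.
move=> eps eps_gt0; rewrite tauH.
apply: (@cvge0_le_inv_linear _ _
  (fun n => n%:R * survE Fc (tau Fc - (eps / Num.sqrt n%:R)%:E)) (1 - p)).
- by rewrite subr_gt0.
- by move=> n; exact: measure_ge0.
- near=> n; apply: (prob_bigmax_deviation mT mC T_neqNy indTC p_lt1 F_le mYs indYs lawYs) => //.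
  by near: n; exact: nbhs_infty_gt.
- exact/cvgeryP/Fc_tail.
Unshelve. all: end_near.
Qed.
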